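(* For all integers $m\ge 2$, $r\ge 2$ and $i\in\{1,\ldots,r\}$ we have $\mu(mi,r)\mid \alpha_{m,r}(i)$. In particular, $\mu(m,r)\mid\alpha_{m,r}(i)$ for all $i\in\{1,\ldots,r\}$.
   Context: For positive integers $a,b$, $\mu(a,b):=\dfrac{a}{\gcd(a,b)}$. For integers $m\ge2$, $r\ge1$, the numbers $\alpha_{m,r}(1),\ldots,\alpha_{m,r}(r)$ are the unique integers such that $\binom{mn+r-1}{r}=\sum_{i=1}^{r}\alpha_{m,r}(i)\binom{n+i-1}{i}$ for all positive integers $n$. *)

From mathcomp Require Import all_boot all_order all_algebra.
Set Implicit Arguments. Unset Strict Implicit. Unset Printing Implicit Defensive.
Import Order.TTheory GRing.Theory Num.Theory.

Definition mu (a b : nat) : nat := a %/ gcdn a b.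

(* alpha : nat -> int is the family alpha_{m,r}(1..r): the defining identity
   C(mn+r-1, r) = sum_{i=1}^r alpha(i) C(n+i-1, i) for all positive n. *)
Definition is_alpha (m r : nat) (alpha : nat -> int) : Prop :=
  forall n : nat, 0 < n ->
    Posz ('C(m * n + r - 1, r)) =
      (\sum_(1 <= i < r.+1) alpha i * Posz ('C(n + i - 1, i)))%R.

From mathcomp Require Import all_boot all_order all_algebra.
From mathcomp Require Import ring.
Set Implicit Arguments. Unset Strict Implicit. Unset Printing Implicit Defensive.
Import Order.TTheory GRing.Theory Num.Theory.

(* With rising x i = x (x + 1) ... (x + i - 1) and r! / i! = r ^_ (r - i), the
   defining identity times r! reads
     rising (m n) r = sum_i alpha i * r ^_ (r - i) * rising n i,
   an identity between polynomials in n that holds for all n > 0, hence for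
   all integers n.  At n = -k it becomes the reciprocity
     (-1)^r C(mk, r) = sum_i (-1)^i alpha i C(k, i).
   As r C(mk, r) = mk C(mk - 1, r - 1) and i C(k, i) = k C(k - 1, i - 1),
   strong induction on k gives mk | r alpha k, and cancelling gcd(mk, r)
   leaves mu(mk, r) | alpha k; finally m | mk. *)

Lemma mu_dvd a r x : 0 < a -> a %| r * x -> mu a r %| x.
Proof.
move=> a_gt0 a_dvd; rewrite /mu.
have g_gt0 : 0 < gcdn a r by rewrite gcdn_gt0 a_gt0.
have [ea er] : a = a %/ gcdn a r * gcdn a r /\ r = r %/ gcdn a r * gcdn a r.
  by rewrite !divnK ?dvdn_gcdl ?dvdn_gcdr.
have coprime_quot : coprime (a %/ gcdn a r) (r %/ gcdn a r).
  by rewrite /coprime -(eqn_pmul2r g_gt0) mul1n muln_gcdl -ea -er.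
rewrite -(Gauss_dvdr _ coprime_quot) -(dvdn_pmul2r g_gt0) mulnAC -er -ea //.
Qed.

Lemma ffact_sub_fact n i : i <= n -> n ^_ (n - i) * i`! = n`!.
Proof. by move=> le_in; rewrite -[in i`!](subKn le_in) ffact_fact ?leq_subr. Qed.

Local Open Scope ring_scope.

Lemma dvdz_mu a r (x : int) :
  (0 < a)%N -> (a%:Z %| r%:Z * x)%Z -> ((mu a r)%:Z %| x)%Z.
Proof. by move=> a_gt0; rewrite !dvdzE abszM; apply: mu_dvd. Qed.

Lemma poly_eq_on_pos_nat (R : numDomainType) (p q : {poly R}) :
  (forall n, (0 < n)%N -> p.[n%:R] = q.[n%:R]) -> p = q.
Proof.
move=> pq; apply/eqP; rewrite -subr_eq0; apply/eqP.
apply: (@roots_geq_poly_eq0 _ _ [seq n.+1%:R | n <- iota 0 (size (p - q))]).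
- by apply/allP=> _ /mapP[n _ ->]; rewrite /root hornerD hornerN pq ?subrr.
- by rewrite map_inj_uniq ?iota_uniq // => i j /eqP; rewrite eqr_nat => /eqP[].
- by rewrite size_map size_iota.
Qed.

Section Rising.
Variable R : comNzRingType.

Definition rising (x : R) (i : nat) : R := \prod_(t < i) (x + t%:R).

Definition rising_poly (i : nat) : {poly R} := \prod_(t < i) ('X + t%:R%:P).

Lemma horner_rising_poly i x : (rising_poly i).[x] = rising x i.
Proof.
rewrite horner_prod; apply: eq_bigr => t _.
by rewrite hornerD hornerX hornerC.
Qed.

Lemma rising_nat a i : rising a.+1%:R i = ((a + i) ^_ i)%:R.
Proof.
elim: i => [|i IH]; first by rewrite /rising big_ord0 ffactn0.
by rewrite /rising big_ord_recr /= -/(rising _ _) IH addnS ffactSS -addSn natrM natrD mulrC.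
Qed.

Lemma rising_opp_nat a i : rising (- a%:R) i = (-1) ^+ i * (a ^_ i)%:R.
Proof.
elim: i => [|i IH]; first by rewrite /rising big_ord0 ffactn0 expr0 mulr1.
rewrite /rising big_ord_recr /= -/(rising _ _) IH ffactnSr natrM exprS.
have [le_ia | lt_ai] := leqP i a; first by rewrite natrB //; ring.
by rewrite ffact_small // !(mulr0, mul0r).
Qed.

Lemma rising_pos_bin n i : (0 < n)%N -> rising n%:R i = ('C(n + i - 1, i) * i`!)%:R.
Proof. by case: n => // n _; rewrite rising_nat bin_ffact addSn subn1. Qed.

End Rising.

Lemma dvdz_mul_bin d i k (b : int) :
  (0 < i)%N -> ((d * i)%:R %| b)%Z -> ((d * k)%:R %| b * 'C(k, i)%:R)%Z.
Proof.
move=> i_gt0 /dvdzP[q ->]; apply/dvdzP; exists (q * 'C(k.-1, i.-1)%:R).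
have := mul_bin_diag k i.-1; rewrite prednK // => bin_diag.
have -> : q * (d * i)%:R * 'C(k, i)%:R = q * d%:R * (i * 'C(k, i))%:R by rewrite !natrM; ring.
by rewrite -bin_diag !natrM; ring.
Qed.

Section Alpha.
Variables (m r : nat) (alpha : nat -> int).
Hypotheses (m_gt0 : (0 < m)%N) (alphaP : is_alpha m r alpha).

Lemma alpha_rising_pos n : (0 < n)%N ->
  rising (m * n)%:R r = \sum_(1 <= i < r.+1) alpha i * (r ^_ (r - i))%:R * rising n%:R i.
Proof.
move=> n_gt0; rewrite rising_pos_bin ?muln_gt0 ?m_gt0 // natrM natz alphaP // mulr_suml.
apply: eq_big_nat => i /andP[_]; rewrite ltnS => le_ir.
rewrite rising_pos_bin // -(ffact_sub_fact le_ir) !natrM natz; ring.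
Qed.

Lemma alpha_rising (x : int) :
  rising (m%:R * x) r = \sum_(1 <= i < r.+1) alpha i * (r ^_ (r - i))%:R * rising x i.
Proof.
pose p := rising_poly int r \Po (m%:R *: 'X).
pose q := \sum_(1 <= i < r.+1) (alpha i * (r ^_ (r - i))%:R) *: rising_poly int i.
have horner_p y : p.[y] = rising (m%:R * y) r.
  by rewrite horner_comp hornerZ hornerX horner_rising_poly.
have horner_q y : q.[y] = \sum_(1 <= i < r.+1) alpha i * (r ^_ (r - i))%:R * rising y i.
  by rewrite horner_sum; apply: eq_bigr => i _; rewrite hornerZ horner_rising_poly.
rewrite -horner_p -horner_q; congr horner; apply: poly_eq_on_pos_nat => n n_gt0.
by rewrite horner_p horner_q -natrM alpha_rising_pos.
Qed.

Lemma alpha_reciprocity k :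
  (-1) ^+ r * 'C(m * k, r)%:R = \sum_(1 <= i < r.+1) (-1) ^+ i * (alpha i * 'C(k, i)%:R).
Proof.
have fact_neq0 : r`!%:R != 0 :> int by rewrite pnatr_eq0 -lt0n fact_gt0.
apply: (mulfI fact_neq0).
rewrite mulrCA -natrM mulnC bin_ffact -rising_opp_nat natrM -mulrN alpha_rising mulr_sumr.
apply: eq_big_nat => i /andP[_]; rewrite ltnS => le_ir.
by rewrite rising_opp_nat -(bin_ffact k) -(ffact_sub_fact le_ir) !natrM; ring.
Qed.

Lemma dvdz_r_alpha k : (1 <= k <= r)%N -> ((m * k)%:R %| r%:R * alpha k)%Z.
Proof.
elim/ltn_ind: k => k IH /andP[k_gt0 le_kr].
have recip : ((m * k)%:R %| r%:R * 'C(m * k, r)%:R)%Z.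
  have := @dvdz_mul_bin 1 r (m * k) r%:R (leq_trans k_gt0 le_kr).
  by rewrite !mul1n; apply.
rewrite -(rpredMsign _ r) mulrCA alpha_reciprocity mulr_sumr in recip.
rewrite (bigD1_seq k) ?iota_uniq ?mem_index_iota ?k_gt0 //= binn mulr1 in recip.
move: recip; rewrite rpredDr; first by rewrite mulrCA rpredMsign.
rewrite big_seq_cond; apply: rpred_sum => i /andP[]; rewrite mem_index_iota.
move=> /andP[i_gt0 le_ir] ne_ik; rewrite mulrCA rpredMsign mulrA.
have [lt_ik | lt_ki | eq_ik] := ltngtP i k.
- by apply: dvdz_mul_bin => //; apply: IH; rewrite ?i_gt0.
- by rewrite bin_small // mulr0 rpred0.
- by rewrite eq_ik eqxx in ne_ik.
Qed.

End Alpha.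

Local Close Scope ring_scope.

Theorem lemma2p6 (m r : nat) (alpha : nat -> int) :
  2 <= m -> 2 <= r -> is_alpha m r alpha ->
  forall i : nat, 1 <= i <= r ->
    (Posz (mu (m * i) r) %| alpha i)%Z /\ (Posz (mu m r) %| alpha i)%Z.
Proof.
move=> m_ge2 _ alphaP i i_range.
have m_gt0 : 0 < m by exact: ltnW.
have := dvdz_r_alpha m_gt0 alphaP i_range; rewrite !natz => dvd_mi.
split; apply: dvdz_mu => //.
- by rewrite muln_gt0 m_gt0; case/andP: i_range.
- by apply: dvdz_trans dvd_mi; rewrite dvdzE /= dvdn_mulr.
Qed.
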